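(* Let $\mathcal{C}$ be a harmonic curve in $\mathbb{P}^2$ and let $P\mapsto p$ be a polarity of $\mathbb{P}^2$ whose set of absolute points $\{P: P\in p\}$ is exactly $\mathcal{C}$. Let $\mathcal{Q}$ be a quadrangle with vertices $A,C,B,D$ (in cyclic order) all lying on $\mathcal{C}$. Then $\mathcal{C}_{\mathcal{Q}}=\mathcal{C}$ if and only if the pole of the diagonal line $A\vee B$ lies on the other diagonal line $C\vee D$. Moreover, for any three distinct points $A,C,B\in\mathcal{C}$, letting $Q$ be the pole of $q=A\vee B$ (equivalently $Q=a\wedge b$, where $a,b$ are the polars of $A,B$) and $D=C\cdot\rho_{Q,q}$, the points $A,C,B,D$ are in general position, $D\in\mathcal{C}$, and the quadrangle $\mathcal{Q}$ with vertices $A,C,B,D$ satisfies $\mathcal{C}_{\mathcal{Q}}=\mathcal{C}$.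
   Context: $\mathbb{P}^2$ denotes the projective plane over a field $F$ with $\operatorname{char}F\neq 2$. For distinct points $X,Y$, $X\vee Y$ is the line through them; for distinct lines $\ell,m$, $\ell\wedge m$ is their common point. Maps act on the right. Four distinct collinear points $A,C,B,D$ form a harmonic set with conjugate pairs $\{A,B\}$ and $\{C,D\}$ if the cross-ratio $(A,B;C,D)=-1$. Four distinct concurrent lines form a harmonic pencil with given conjugate pairs if some (equivalently every) line not through their common point meets them in a harmonic set with the corresponding conjugate pairs. For a point $P$ and a line $m$ with $P\notin m$, the harmonic reflection $\rho_{P,m}$ of $\mathbb{P}^2$ fixes $P$ and every point of $m$ and sends every other point $X$ to the harmonic conjugate of $X$ with respect to $P$ and $(X\vee P)\wedge m$. A polarity of $\mathbb{P}^2$ is a bijection $P\mapsto p$ from points to lines such that $P\in q\iff Q\in p$ for all points $P,Q$; $p$ is the polar of $P$ and $P$ the pole of $p$. A quadrangle $\mathcal{Q}$ with vertices $A,C,B,D$ (in cyclic order) consists of four points in general position (no three collinear) together with this cyclic order up to reversal; its diagonal lines are $A\vee B$ and $C\vee D$. The harmonic curve $\mathcal{C}_{\mathcal{Q}}$ is the set consisting of $A,C,B,D$ together with all points $Z\notin\{A,B,C,D\}$ such that $Z\vee A, Z\vee C, Z\vee B, Z\vee D$ are four distinct lines forming a harmonic pencil with conjugate pairs $\{Z\vee A,Z\vee B\}$ and $\{Z\vee C,Z\vee D\}$. A harmonic curve is any set of the form $\mathcal{C}_{\mathcal{Q}}$ (every harmonic curve is the set of absolute points of some polarity). *)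

From HB Require Import structures.
From mathcomp Require Import all_boot all_order all_algebra.
Set Implicit Arguments. Unset Strict Implicit. Unset Printing Implicit Defensive.
Import Order.TTheory GRing.Theory.
Local Open Scope ring_scope.

Section Proj.
Variable F : fieldType.

(* A nonzero row vector of F^3 is normalized when its first nonzero
   coordinate equals 1.  Each point of P^2(F) has exactly one normalized
   representative, so points are identified with normalized vectors. *)
Definition normalized (v : 'rV[F]_3) : bool :=
  if v 0 0 != 0 then v 0 0 == 1
  else if v 0 1 != 0 then v 0 1 == 1
  else v 0 2%:R == 1.

(* points of P^2(F); lines are represented by their dual coordinates,
   i.e. also by elements of this type *)
Definition point := {v : 'rV[F]_3 | normalized v}.
Definition line := point.

Definition on (X : point) (l : line) : Prop :=
  \sum_(i < 3) (val X) 0 i * (val l) 0 i = 0.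

Definition is_join (X Y : point) (l : line) : Prop :=
  X <> Y /\ on X l /\ on Y l.

Definition is_meet (l m : line) (X : point) : Prop :=
  l <> m /\ on X l /\ on X m.

Definition collinear (X Y Z : point) : Prop :=
  exists l, on X l /\ on Y l /\ on Z l.

(* Four distinct points A, B, C, D form a harmonic set with conjugate pairs
   {A,B} and {C,D}: they are collinear and (A,B;C,D) = -1.  Writing
   C = a A + b B and D = c A + d B (representatives), the cross-ratio is
   (A,B;C,D) = (b c)/(a d), so (A,B;C,D) = -1 iff b c + a d = 0. *)
Definition harmonic (A B C D : point) : Prop :=
  [/\ A <> B, A <> C, A <> D & B <> C] /\ [/\ B <> D & C <> D] /\
  exists a b c d : F,
    [/\ val C = a *: val A + b *: val B,
        val D = c *: val A + d *: val B &
        b * c + a * d = 0].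

Definition harmonic_pencil (Z : point) (l1 l2 l3 l4 : line) : Prop :=
  [/\ l1 <> l2, l1 <> l3, l1 <> l4 & l2 <> l3] /\ [/\ l2 <> l4 & l3 <> l4] /\
  [/\ on Z l1, on Z l2, on Z l3 & on Z l4] /\
  exists m, ~ on Z m /\
    exists X1 X2 X3 X4,
      [/\ is_meet l1 m X1, is_meet l2 m X2, is_meet l3 m X3, is_meet l4 m X4
        & harmonic X1 X2 X3 X4].

Definition general_position (A C B D : point) : Prop :=
  [/\ A <> C, A <> B, A <> D & C <> B] /\ [/\ C <> D & B <> D] /\
  [/\ ~ collinear A C B, ~ collinear A C D, ~ collinear A B D
    & ~ collinear C B D].

(* The harmonic curve C_Q of the quadrangle with vertices A, C, B, D (in
   cyclic order), diagonals A \/ B and C \/ D. *)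
Definition harmonic_curve_of (A C B D : point) (Z : point) : Prop :=
  Z = A \/ Z = C \/ Z = B \/ Z = D \/
  ([/\ Z <> A, Z <> C, Z <> B & Z <> D] /\
   exists la lc lb ld,
     [/\ is_join Z A la, is_join Z C lc, is_join Z B lb, is_join Z D ld
       & harmonic_pencil Z la lb lc ld]).

Definition is_harmonic_curve (S : point -> Prop) : Prop :=
  exists A C B D, general_position A C B D /\
    forall Z, S Z <-> harmonic_curve_of A C B D Z.

Definition is_polarity (pol : point -> line) : Prop :=
  bijective pol /\ forall P Q, on P (pol Q) <-> on Q (pol P).

Definition harmonic_reflection (P : point) (m : line) (X Y : point) : Prop :=
  ((X = P \/ on X m) /\ Y = X) \/
  (X <> P /\ ~ on X m /\
   exists n M, [/\ is_join X P n, is_meet n m M & harmonic P M X Y]).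

End Proj.

(* In coordinates, the harmonic curve of a quadrangle [A, C, B, D] in general
   position is the zero set of the quadratic form [[zAC][zBD] + [zAD][zBC]]
   (brackets are 3x3 determinants), a nondegenerate conic with symmetric
   operator [K].  A polarity whose absolute points are exactly this conic is
   the polarity of [K]: the polar of an absolute point is its tangent, as it
   contains no other absolute point, and the polar of any other point is
   recovered from the polars of absolute points, four of which are in general
   position.  Everything then reduces to the bilinear form [b]
   of [K]: for [A, B, C] on the conic the pole of [A B] is
   [b(B,C) A + b(A,C) B - b(A,B) C] and the reflection of [C] is
   [D* = 2 b(B,C) A + 2 b(A,C) B - b(A,B) C].  In the triangle coordinates of
   [A, B, C] the harmonic curve of [A, C, B, D*] is the conic, and for [D] on
   the conic the pole of [A B] lies on [C D] exactly when [D] is [D*]. *)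

From mathcomp Require Import all_boot all_order all_algebra.
From mathcomp Require Import ring.
Set Implicit Arguments. Unset Strict Implicit. Unset Printing Implicit Defensive.
Import GRing.Theory.
Local Open Scope ring_scope.

Definition vec3 (F : fieldType) (a b c : F) : 'rV[F]_3 :=
  \row_(i < 3) nth 0 [:: a; b; c] i.

Definition dotv (F : fieldType) (u v : 'rV[F]_3) :=
  u 0 0 * v 0 0 + u 0 1 * v 0 1 + u 0 2%:R * v 0 2%:R.
Definition crossv (F : fieldType) (u v : 'rV[F]_3) : 'rV[F]_3 :=
  vec3 (u 0 1 * v 0 2%:R - u 0 2%:R * v 0 1) (u 0 2%:R * v 0 0 - u 0 0 * v 0 2%:R)
       (u 0 0 * v 0 1 - u 0 1 * v 0 0).
Definition det3 (F : fieldType) (u v w : 'rV[F]_3) := dotv u (crossv v w).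

Lemma row3_eq (F : fieldType) (u v : 'rV[F]_3) :
  u 0 0 = v 0 0 -> u 0 1 = v 0 1 -> u 0 2%:R = v 0 2%:R -> u = v.
Proof.
move=> h0 h1 h2; apply/rowP => -[[|[|[|k]]] Hi] //.
- by have -> : Ordinal Hi = 0 by apply: val_inj.
- by have -> : Ordinal Hi = 1 by apply: val_inj.
- by have -> : Ordinal Hi = 2%:R by apply: val_inj.
Qed.

Ltac vcomp := rewrite /det3 /dotv /crossv ?mxE /=.
Ltac vring := apply: row3_eq; vcomp; ring.

Section Coordinates.
Variable F : fieldType.
Local Notation vec := 'rV[F]_3.
Local Notation point := (point F).
Implicit Types u v w l : vec.

Lemma row3_neq0 (v : vec) :
  v != 0 -> [\/ v 0 0 != 0, v 0 1 != 0 | v 0 2%:R != 0].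
Proof.
move=> hv; have [h0|] := eqVneq (v 0 0) 0; last by constructor 1.
have [h1|] := eqVneq (v 0 1) 0; last by constructor 2.
have [h2|] := eqVneq (v 0 2%:R) 0; last by constructor 3.
by case/eqP: hv; apply: row3_eq; rewrite ?mxE.
Qed.

Lemma dotvC u v : dotv u v = dotv v u. Proof. vcomp; ring. Qed.

Lemma dotvDl a b u v w : dotv (a *: u + b *: v) w = a * dotv u w + b * dotv v w.
Proof. vcomp; ring. Qed.

Lemma dotvDr a b u v w : dotv w (a *: u + b *: v) = a * dotv w u + b * dotv w v.
Proof. vcomp; ring. Qed.

Lemma dotvZl a u w : dotv (a *: u) w = a * dotv u w. Proof. vcomp; ring. Qed.

Lemma dotvZr a u w : dotv w (a *: u) = a * dotv w u. Proof. vcomp; ring. Qed.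

Lemma dot0v w : dotv 0 w = 0. Proof. vcomp; ring. Qed.
Lemma dotvD1l u v w : dotv (u + v) w = dotv u w + dotv v w. Proof. vcomp; ring. Qed.

Lemma dotv_crossl u v : dotv u (crossv u v) = 0. Proof. vcomp; ring. Qed.

Lemma dotv_crossr u v : dotv v (crossv u v) = 0. Proof. vcomp; ring. Qed.

Lemma crossvZl a u v : crossv (a *: u) v = a *: crossv u v. Proof. vring. Qed.

Lemma crossvZr a u v : crossv u (a *: v) = a *: crossv u v. Proof. vring. Qed.

Lemma crossvv u : crossv u u = 0. Proof. vring. Qed.

Lemma crossv0 u : crossv u 0 = 0. Proof. vring. Qed.

Lemma crossvC u v : crossv u v = - crossv v u. Proof. vring. Qed.

Lemma crossv_cross l (x y : vec) : crossv l (crossv x y) = dotv l y *: x - dotv l x *: y.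
Proof. vring. Qed.

Lemma crossv_comb (q m : vec) x1 y1 x2 y2 :
  crossv (x1 *: q + y1 *: m) (x2 *: q + y2 *: m) = (x1 * y2 - y1 * x2) *: crossv q m.
Proof. vring. Qed.

Lemma det3_cycle (x y z : vec) : det3 x y z = det3 y z x. Proof. vcomp; ring. Qed.

Lemma det3_swap12 (x y z : vec) : det3 x y z = - det3 y x z. Proof. vcomp; ring. Qed.

Lemma det3_swap23 (x y z : vec) : det3 x y z = - det3 x z y. Proof. vcomp; ring. Qed.

Lemma det3_rep12 (x y : vec) : det3 x x y = 0. Proof. vcomp; ring. Qed.

Lemma det3_rep13 (x y : vec) : det3 x y x = 0. Proof. vcomp; ring. Qed.

Lemma det3_rep23 (x y : vec) : det3 x y y = 0. Proof. vcomp; ring. Qed.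

Lemma det3Zr (x y z : vec) k : det3 x y (k *: z) = k * det3 x y z. Proof. vcomp; ring. Qed.

Lemma det3Zl (x y z : vec) k : det3 (k *: x) y z = k * det3 x y z. Proof. vcomp; ring. Qed.
Lemma det3Dl (x y u v : vec) al be :
  det3 (al *: x + be *: y) u v = al * det3 x u v + be * det3 y u v.
Proof. exact: dotvDl. Qed.

Lemma cramer u v w (z : vec) :
  det3 u v w *: z = det3 z v w *: u + det3 u z w *: v + det3 u v z *: w.
Proof. vring. Qed.

Lemma cramer_dual (x y z : vec) l : det3 x y z *: l =
  dotv l x *: crossv y z + dotv l y *: crossv z x + dotv l z *: crossv x y.
Proof. vring. Qed.

Lemma det3_neq0_crossv (x y z : vec) : det3 x y z != 0 -> crossv y z != 0.
Proof. by apply: contraNneq => h; rewrite /det3 h /dotv !mxE !mulr0 !addr0. Qed.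

Lemma det3_neq0_r (x y z : vec) : det3 x y z != 0 -> z != 0.
Proof. by apply: contraNneq => ->; rewrite /det3 crossv0 dotvC dot0v. Qed.

Lemma exists_det3_neq0 (x y : vec) : crossv x y != 0 -> exists w, det3 x y w != 0.
Proof.
have e w : det3 x y w = dotv w (crossv x y) by rewrite det3_cycle det3_cycle.
case/row3_neq0 => h; [exists (vec3 1 0 0) | exists (vec3 0 1 0) | exists (vec3 0 0 1)];
  by move: h; rewrite e /dotv !mxE /= !mul1r !mul0r ?addr0 ?add0r.
Qed.

Lemma row3_coord_neq0 (v : vec) i : v 0 i != 0 -> v != 0.
Proof. by apply: contraNneq => ->; rewrite mxE. Qed.

Lemma exists_dotv_neq0 (u : vec) : u != 0 -> exists2 e, e != 0 & dotv u e != 0.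
Proof.
case/row3_neq0 => h.
- exists (vec3 1 0 0); first by apply: (@row3_coord_neq0 _ 0); rewrite !mxE oner_eq0.
  by move: h; vcomp; rewrite !mulr1 !mulr0 !addr0.
- exists (vec3 0 1 0); first by apply: (@row3_coord_neq0 _ 1); rewrite !mxE oner_eq0.
  by move: h; vcomp; rewrite !mulr1 !mulr0 add0r addr0.
- exists (vec3 0 0 1); first by apply: (@row3_coord_neq0 _ 2%:R); rewrite !mxE oner_eq0.
  by move: h; vcomp; rewrite !mulr1 !mulr0 !add0r.
Qed.

Lemma exists_dotv_eq0 (u : vec) : u != 0 -> exists2 v, v != 0 & dotv u v = 0.
Proof.
case/row3_neq0 => h.
- exists (vec3 (u 0 1) (- u 0 0) 0); last by vcomp; ring.
  by apply: (@row3_coord_neq0 _ 1); rewrite !mxE /= oppr_eq0.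
- exists (vec3 (u 0 1) (- u 0 0) 0); last by vcomp; ring.
  by apply: (@row3_coord_neq0 _ 0); rewrite !mxE.
- exists (vec3 (u 0 2%:R) 0 (- u 0 0)); last by vcomp; ring.
  by apply: (@row3_coord_neq0 _ 0); rewrite !mxE.
Qed.

Lemma crossv_eq0_scale (u v : vec) : crossv u v = 0 -> v != 0 -> exists k, u = k *: v.
Proof.
move=> hc hv.
have coord i : (crossv u v) 0 i = 0 by rewrite hc mxE.
have c0 : u 0 1 * v 0 2%:R = u 0 2%:R * v 0 1.
  by apply/eqP; rewrite -subr_eq0; apply/eqP; have := coord 0; rewrite !mxE.
have c1 : u 0 2%:R * v 0 0 = u 0 0 * v 0 2%:R.
  by apply/eqP; rewrite -subr_eq0; apply/eqP; have := coord 1; rewrite !mxE.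
have c2 : u 0 0 * v 0 1 = u 0 1 * v 0 0.
  by apply/eqP; rewrite -subr_eq0; apply/eqP; have := coord 2%:R; rewrite !mxE.
case/row3_neq0: hv => h.
- exists (u 0 0 / v 0 0); apply: row3_eq; rewrite !mxE.
  + by rewrite divfK.
  + by apply: (mulIf h); rewrite mulrAC divfK // c2 mulrC.
  + by apply: (mulIf h); rewrite mulrAC divfK // -c1 mulrC.
- exists (u 0 1 / v 0 1); apply: row3_eq; rewrite !mxE.
  + by apply: (mulIf h); rewrite mulrAC divfK // -c2 mulrC.
  + by rewrite divfK.
  + by apply: (mulIf h); rewrite mulrAC divfK // c0 mulrC.
- exists (u 0 2%:R / v 0 2%:R); apply: row3_eq; rewrite !mxE.
  + by apply: (mulIf h); rewrite mulrAC divfK // c1 mulrC.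
  + by apply: (mulIf h); rewrite mulrAC divfK // -c0 mulrC.
  + by rewrite divfK.
Qed.

Lemma dotv_eq0_crossv_scale (l x y : vec) : l != 0 -> dotv l x = 0 -> dotv l y = 0 ->
  crossv x y != 0 -> exists k, l = k *: crossv x y.
Proof.
move=> hl hx hy hc; apply: crossv_eq0_scale => //.
by rewrite crossv_cross hx hy !scale0r subr0.
Qed.

Lemma det3_eq0_span (x y z : vec) :
  crossv x y != 0 -> det3 x y z = 0 -> exists a b, z = a *: x + b *: y.
Proof.
move=> hc hd; have [w hw] := exists_det3_neq0 hc.
exists (det3 z y w / det3 x y w), (det3 x z w / det3 x y w).
apply: (scalerI hw); rewrite cramer hd scale0r addr0 scalerDr !scalerA.
by rewrite !(mulrC (det3 x y w)) !divfK.
Qed.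

Lemma dotv_eq0_det3 (l x y z : vec) :
  l != 0 -> dotv l x = 0 -> dotv l y = 0 -> dotv l z = 0 -> det3 x y z = 0.
Proof.
move=> hl hx hy hz; apply/eqP; apply: contraNT hl => hd.
by apply/eqP; apply: (scalerI hd); rewrite cramer_dual hx hy hz !scale0r !addr0 scaler0.
Qed.

Lemma exists_dotv_eq0_neq0 (l t : vec) :
  crossv l t != 0 -> exists y, dotv l y = 0 /\ dotv t y != 0.
Proof.
move=> /exists_det3_neq0 [e he]; exists (crossv e l); split; first exact: dotv_crossr.
by rewrite -/(det3 t e l) det3_cycle det3_cycle.
Qed.

Lemma normalized_neq0 (v : vec) : normalized v -> v != 0.
Proof.
rewrite /normalized; apply: contraTneq => ->; rewrite !mxE eqxx /=.
by rewrite eq_sym oner_eq0.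
Qed.

Lemma normalized_scale_eq (u v : vec) k :
  normalized u -> normalized v -> u = k *: v -> u = v.
Proof.
move=> nu nv e; have un := normalized_neq0 nu.
have k0 : k != 0 by apply: contraNneq un => k0; rewrite e k0 scale0r.
suff k1 : k = 1 by rewrite e k1 scale1r.
move: nu nv; rewrite /normalized e !mxE !mulf_eq0 !negb_or k0 /=.
case: ifP => [_ /eqP h1 /eqP h2|_]; first by rewrite h2 mulr1 in h1.
by case: ifP => [_ /eqP h1 /eqP h2|_ /eqP h1 /eqP h2]; rewrite h2 mulr1 in h1.
Qed.

Lemma point_neq0 (X : point) : val X != 0.
Proof. exact: normalized_neq0 (valP X). Qed.

Lemma crossv0_point_eq (X Y : point) : crossv (val X) (val Y) = 0 -> X = Y.
Proof.
move=> /crossv_eq0_scale /(_ (point_neq0 Y)) [k e].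
by apply: val_inj; apply: normalized_scale_eq (valP X) (valP Y) e.
Qed.

Lemma scale_point_eq (X Y : point) k : val X = k *: val Y -> X = Y.
Proof. by move=> e; apply: crossv0_point_eq; rewrite e crossvZl crossvv scaler0. Qed.

Lemma point_neq_crossv (X Y : point) : X <> Y -> crossv (val X) (val Y) != 0.
Proof. by move=> ne; apply/eqP => /crossv0_point_eq. Qed.

Definition normv (v : vec) : vec :=
  if v 0 0 != 0 then (v 0 0)^-1 *: v
  else if v 0 1 != 0 then (v 0 1)^-1 *: v else (v 0 2%:R)^-1 *: v.

Lemma normvP v :
  v != 0 -> normalized (normv v) /\ exists2 k, k != 0 & normv v = k *: v.
Proof.
move=> hv; case h0: (v 0 0 != 0).
  have -> : normv v = (v 0 0)^-1 *: v by rewrite /normv h0.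
  split; last by exists (v 0 0)^-1; rewrite ?invr_eq0.
  by rewrite /normalized !mxE mulVf // oner_neq0 eqxx.
move/negbFE/eqP: h0 => h0; case h1: (v 0 1 != 0).
  have -> : normv v = (v 0 1)^-1 *: v by rewrite /normv h0 eqxx h1.
  split; last by exists (v 0 1)^-1; rewrite ?invr_eq0.
  by rewrite /normalized !mxE h0 mulr0 eqxx /= mulVf // oner_neq0 eqxx.
move/negbFE/eqP: h1 => h1.
have h2 : v 0 2%:R != 0 by case/row3_neq0: hv; rewrite ?h0 ?h1 ?eqxx.
have -> : normv v = (v 0 2%:R)^-1 *: v by rewrite /normv h0 h1 eqxx.
split; last by exists (v 0 2%:R)^-1; rewrite ?invr_eq0.
by rewrite /normalized !mxE h0 h1 !mulr0 eqxx /= mulVf.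
Qed.

Lemma normalized_e1 : normalized (vec3 1 0 0 : vec).
Proof. by rewrite /normalized !mxE /= oner_neq0 eqxx. Qed.

(* The point represented by [v]; junk value [(1 : 0 : 0)] at [v = 0]. *)
Definition point_of (v : vec) : point :=
  insubd (@exist _ (@normalized F) _ normalized_e1) (normv v).

Lemma val_point_of v : v != 0 -> exists2 k, k != 0 & val (point_of v) = k *: v.
Proof.
by case/normvP => hn [k k0 e]; exists k => //; rewrite /point_of insubdK.
Qed.

Lemma onE (X l : point) : on X l <-> dotv (val X) (val l) = 0.
Proof.
rewrite /on /dotv !big_ord_recr big_ord0 /= add0r.
have -> : widen_ord (leqnSn 2) (widen_ord (leqnSn 1) ord_max) = 0 :> 'I_3
  by apply: val_inj.
have -> : widen_ord (leqnSn 2) ord_max = 1 :> 'I_3 by apply: val_inj.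
by have -> : ord_max = 2%:R :> 'I_3 by apply: val_inj.
Qed.

Lemma on_sym (X l : point) : on X l <-> on l X.
Proof. by rewrite !onE dotvC. Qed.

Lemma on_point_of (X : point) v : v != 0 -> on X (point_of v) <-> dotv (val X) v = 0.
Proof.
move=> hv; rewrite onE; case: (val_point_of hv) => k k0 ->; rewrite dotvZr.
by split => [/eqP|->]; rewrite ?mulr0 // mulf_eq0 (negPf k0) => /eqP.
Qed.

Definition join (X Y : point) : line F := point_of (crossv (val X) (val Y)).
Definition meet (l m : line F) : point := point_of (crossv (val l) (val m)).

Lemma on_join (X Y Z : point) :
  X <> Y -> on Z (join X Y) <-> det3 (val X) (val Y) (val Z) = 0.
Proof.
by move=> /point_neq_crossv h; rewrite on_point_of // det3_cycle det3_cycle.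
Qed.

Lemma is_join_join (X Y : point) : X <> Y -> is_join X Y (join X Y).
Proof.
by move=> ne; split=> //; split; apply/(on_join _ ne); rewrite ?det3_rep13 ?det3_rep23.
Qed.

Lemma is_meet_meet (l m : line F) : l <> m -> is_meet l m (meet l m).
Proof.
move=> ne; split=> //; split; apply/on_sym; rewrite -[meet l m]/(join l m);
  by apply/(on_join _ ne); rewrite ?det3_rep13 ?det3_rep23.
Qed.

Lemma join_uniq (X Y l l' : point) :
  X <> Y -> on X l -> on Y l -> on X l' -> on Y l' -> l = l'.
Proof.
move=> /point_neq_crossv hc; rewrite !onE => h1 h2 h3 h4.
case: (dotv_eq0_crossv_scale (point_neq0 l) _ _ hc); rewrite ?(dotvC (val l)) //.
case: (dotv_eq0_crossv_scale (point_neq0 l') _ _ hc); rewrite ?(dotvC (val l')) //.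
move=> k' e' k e; apply: crossv0_point_eq.
by rewrite e e' crossvZl crossvZr crossvv !scaler0.
Qed.

Lemma on_join_comb (X Y Z l : point) : X <> Y -> on X l -> on Y l -> on Z l ->
  exists a b, val Z = a *: val X + b *: val Y.
Proof.
move=> ne; rewrite !onE => h1 h2 h3; apply: (det3_eq0_span (point_neq_crossv ne)).
by apply: (dotv_eq0_det3 (point_neq0 l)); rewrite dotvC.
Qed.

Lemma on_det3 (X Y Z r : point) : X <> Y -> on X r -> on Y r ->
  on Z r <-> det3 (val Z) (val X) (val Y) = 0.
Proof.
move=> ne; rewrite !onE => hx hy.
have hc := point_neq_crossv ne.
case: (dotv_eq0_crossv_scale (point_neq0 r) _ _ hc); rewrite ?(dotvC (val r)) // => k e.
have k0 : k != 0 by apply: contraTneq (point_neq0 r) => k0; rewrite e k0 scale0r eqxx.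
rewrite e dotvZr -/(det3 _ _ _); split => [/eqP|->]; last by rewrite mulr0.
by rewrite mulf_eq0 (negPf k0) => /eqP.
Qed.

Lemma collinear_det3 (X Y Z : point) :
  collinear X Y Z <-> det3 (val X) (val Y) (val Z) = 0.
Proof.
split.
  case=> l; rewrite !onE => -[h1 [h2 h3]].
  by apply: (dotv_eq0_det3 (point_neq0 l)); rewrite dotvC.
move=> hd.
have mk v : v != 0 -> dotv (val X) v = 0 -> dotv (val Y) v = 0 ->
    dotv (val Z) v = 0 -> collinear X Y Z.
  by move=> hv h1 h2 h3; exists (point_of v); split; [|split]; apply/on_point_of.
have [/crossv0_point_eq eXY|hxy] := eqVneq (crossv (val X) (val Y)) 0; last first.
  apply: (mk _ hxy); rewrite ?dotv_crossl ?dotv_crossr //.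
  by rewrite det3_cycle det3_cycle in hd.
subst Y; have [/crossv0_point_eq eXZ|hxz] := eqVneq (crossv (val X) (val Z)) 0.
  by subst Z; case: (exists_dotv_eq0 (point_neq0 X)) => v hv h; apply: (mk _ hv).
by apply: (mk _ hxz); rewrite ?dotv_crossl ?dotv_crossr.
Qed.

Lemma noncollinear_det3 (X Y Z : point) :
  ~ collinear X Y Z -> det3 (val X) (val Y) (val Z) != 0.
Proof. by move=> nc; apply/eqP => /collinear_det3. Qed.

Lemma det3_neq0_neq (X Y W : point) :
  det3 (val X) (val Y) (val W) != 0 -> [/\ X <> Y, X <> W & Y <> W].
Proof.
by move=> hd; split=> e; move: hd; rewrite e ?det3_rep12 ?det3_rep13 ?det3_rep23 eqxx.
Qed.

Lemma comb_neq (X Y : point) (q m : vec) x1 y1 x2 y2 :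
  val X = x1 *: q + y1 *: m -> val Y = x2 *: q + y2 *: m -> crossv q m != 0 ->
  x1 * y2 - y1 * x2 != 0 -> X <> Y.
Proof.
move=> eX eY hc hx e; subst Y; move: (crossvv (val X)); rewrite {1}eX {1}eY crossv_comb.
by move/eqP; rewrite scaler_eq0 (negPf hx) (negPf hc).
Qed.

Lemma collinear_rot (X Y Z : point) : collinear X Y Z -> collinear Y Z X.
Proof. by case=> l [hX [hY hZ]]; exists l. Qed.

Lemma collinear_swap (X Y Z : point) : collinear X Y Z -> collinear Y X Z.
Proof. by case=> l [hX [hY hZ]]; exists l. Qed.

Lemma collinear_pivot (X Y Z W : point) :
  X <> Y -> collinear X Y Z -> collinear X Y W -> collinear Y Z W.
Proof.
move=> ne [l [hX [hY hZ]]] [l' [hX' [hY' hW]]].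
by rewrite -(join_uniq ne hX hY hX' hY') in hW; exists l.
Qed.

End Coordinates.

Section HarmonicCurve.
Variable F : fieldType.
Hypothesis hchar : (2%:R : F) != 0.
Local Notation vec := 'rV[F]_3.
Local Notation point := (point F).

(* Up to a nonzero factor, the cross-ratio condition [(l1,l2;l3,l4) = -1] for
   the lines [li = z \/ xi] of a pencil. *)
Definition pencil_form (z x1 x2 x3 x4 : vec) :=
  det3 z x1 x3 * det3 z x2 x4 + det3 z x1 x4 * det3 z x2 x3.

Definition hcurve_form (a c b d z : vec) := pencil_form z a b c d.

Lemma pencil_form_span (z x1 x2 : vec) a b c d :
  pencil_form z x1 x2 (a *: x1 + b *: x2) (c *: x1 + d *: x2) =
  - (b * c + a * d) * det3 z x1 x2 ^+ 2.
Proof. rewrite /pencil_form; vcomp; ring. Qed.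

Lemma pencil_form_comb (z x1 x2 x3 x4 : vec) a1 a2 a3 a4 b1 b2 b3 b4 :
  pencil_form z (a1 *: z + b1 *: x1) (a2 *: z + b2 *: x2) (a3 *: z + b3 *: x3)
    (a4 *: z + b4 *: x4) = b1 * b2 * b3 * b4 * pencil_form z x1 x2 x3 x4.
Proof. rewrite /pencil_form; vcomp; ring. Qed.

Lemma harmonic_pencil_form (X1 X2 X3 X4 : point) z :
  harmonic X1 X2 X3 X4 -> pencil_form z (val X1) (val X2) (val X3) (val X4) = 0.
Proof. by case=> _ [_ [a [b [c [d [-> -> h]]]]]]; rewrite pencil_form_span h oppr0 mul0r. Qed.

Lemma hcurve_form_vertex (a c b d : vec) : [/\ hcurve_form a c b d a = 0,
  hcurve_form a c b d c = 0, hcurve_form a c b d b = 0 & hcurve_form a c b d d = 0].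
Proof. by split; rewrite /hcurve_form /pencil_form; vcomp; ring. Qed.

Lemma hcurve_form_diagAB (a c b d : vec) u v :
  hcurve_form a c b d (u *: a + v *: b) = - 2%:R * u * v * det3 a b c * det3 a b d.
Proof. rewrite /hcurve_form /pencil_form; vcomp; ring. Qed.

Lemma hcurve_form_diagCD (a c b d : vec) u v :
  hcurve_form a c b d (u *: c + v *: d) = - 2%:R * u * v * det3 a c d * det3 b c d.
Proof. rewrite /hcurve_form /pencil_form; vcomp; ring. Qed.

Lemma hcurve_formZ (a c b d z : vec) k :
  hcurve_form a c b d (k *: z) = k ^+ 2 * hcurve_form a c b d z.
Proof. rewrite /hcurve_form /pencil_form; vcomp; ring. Qed.

Lemma hcurve_formZd (a c b d z : vec) k :
  hcurve_form a c b (k *: d) z = k * hcurve_form a c b d z.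
Proof. rewrite /hcurve_form /pencil_form; vcomp; ring. Qed.

Lemma hcurve_form_span (a c b z : vec) s r p :
  hcurve_form a c b ((2%:R * s) *: a + (2%:R * r) *: b + (- p) *: c) z = 2%:R *
  (p * det3 z b c * det3 a z c + r * det3 z b c * det3 a b z + s * det3 a z c * det3 a b z).
Proof. rewrite /hcurve_form /pencil_form; vcomp; ring. Qed.

Lemma hcurve_form_at_span (a c b d : vec) s r p :
  hcurve_form a c b d ((2%:R * s) *: a + (2%:R * r) *: b + (- p) *: c) =
  - 2%:R * det3 a b c * (4%:R * r * s * det3 a b d + r * p * det3 d b c
                         + s * p * det3 a d c).
Proof. rewrite /hcurve_form /pencil_form; vcomp; ring. Qed.

Lemma on_join_comb_neq0 (Z V X l m : point) : Z <> V -> on Z l -> on V l ->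
  on X l -> on X m -> ~ on Z m -> exists a b, b != 0 /\ val X = a *: val Z + b *: val V.
Proof.
move=> ne hZ hV hX hXm nZ; case: (on_join_comb ne hZ hV hX) => a [b e].
exists a, b; split => //; apply/eqP => b0; apply: nZ.
suff -> : Z = X by [].
by apply: crossv0_point_eq; rewrite e b0 scale0r addr0 crossvZr crossvv scaler0.
Qed.

Lemma harmonic_pencil_join_form (Z P1 P2 P3 P4 l1 l2 l3 l4 : point) :
  is_join Z P1 l1 -> is_join Z P2 l2 -> is_join Z P3 l3 -> is_join Z P4 l4 ->
  harmonic_pencil Z l1 l2 l3 l4 ->
  pencil_form (val Z) (val P1) (val P2) (val P3) (val P4) = 0.
Proof.
move=> [nZ1 [Z1 P1l]] [nZ2 [Z2 P2l]] [nZ3 [Z3 P3l]] [nZ4 [Z4 P4l]].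
case=> _ [_ [_ [m [nZm [X1 [X2 [X3 [X4 [[_ [X1l X1m]] [_ [X2l X2m]] [_ [X3l X3m]]
  [_ [X4l X4m]] hX]]]]]]]]].
case: (on_join_comb_neq0 nZ1 Z1 P1l X1l X1m nZm) => a1 [b1 [b10 e1]].
case: (on_join_comb_neq0 nZ2 Z2 P2l X2l X2m nZm) => a2 [b2 [b20 e2]].
case: (on_join_comb_neq0 nZ3 Z3 P3l X3l X3m nZm) => a3 [b3 [b30 e3]].
case: (on_join_comb_neq0 nZ4 Z4 P4l X4l X4m nZm) => a4 [b4 [b40 e4]].
have := harmonic_pencil_form (val Z) hX; rewrite e1 e2 e3 e4 pencil_form_comb => /eqP.
by rewrite !mulf_eq0 (negPf b10) (negPf b20) (negPf b30) (negPf b40) => /eqP.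
Qed.

Lemma det3_neq0_join_neq (Z P Q : point) :
  det3 (val Z) (val P) (val Q) != 0 -> join Z P <> join Z Q.
Proof.
move=> hd e; have nZQ : Z <> Q by move=> eZQ; move: hd; rewrite eZQ det3_rep13 eqxx.
have : on Q (join Z Q) by apply/(on_join _ nZQ); rewrite det3_rep23.
have nZP : Z <> P by move=> eZP; move: hd; rewrite eZP det3_rep12 eqxx.
by rewrite -e (on_join _ nZP) => /eqP; apply/negP.
Qed.

Lemma meet_join_comb (Z P m : point) : Z <> P -> ~ on Z m ->
  exists2 X, is_meet (join Z P) m X &
    exists a b, b != 0 /\ val X = a *: val Z + b *: val P.
Proof.
move=> nZP nZm; have [_ [ZZP PZP]] := is_join_join nZP.
have nlm : join Z P <> m by move=> e; apply: nZm; rewrite -e.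
have hX := is_meet_meet nlm; have [_ [Xl Xm]] := hX.
by exists (meet (join Z P) m) => //; apply: (on_join_comb_neq0 nZP ZZP PZP Xl Xm nZm).
Qed.

Lemma meet_pencil_neq (Z X Y l l' m : point) : l <> l' -> on Z l -> on Z l' ->
  ~ on Z m -> on X l -> on X m -> on Y l' -> on Y m -> X <> Y.
Proof.
move=> nl Zl Zl' nZ Xl Xm Yl' Ym eXY; subst Y; apply: nl.
by apply: (join_uniq (X := Z) (Y := X)) => // eZX; subst X.
Qed.

Lemma pencil_form_harmonic (Z X1 X2 X3 X4 m : point) : ~ on Z m ->
  on X1 m -> on X2 m -> on X3 m -> on X4 m ->
  [/\ X1 <> X2, X1 <> X3, X1 <> X4 & X2 <> X3] -> X2 <> X4 -> X3 <> X4 ->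
  pencil_form (val Z) (val X1) (val X2) (val X3) (val X4) = 0 ->
  harmonic X1 X2 X3 X4.
Proof.
move=> nZm X1m X2m X3m X4m [n12 n13 n14 n23] n24 n34 h0.
do 2![split; first by []].
case: (on_join_comb n12 X1m X2m X3m) => a [b e3].
case: (on_join_comb n12 X1m X2m X4m) => c [d e4].
exists a, b, c, d; split=> //.
have dZ : det3 (val Z) (val X1) (val X2) != 0.
  apply/eqP; rewrite det3_cycle => /(det3_eq0_span (point_neq_crossv n12)) [p [q ez]].
  move: X1m X2m; rewrite !onE => h1 h2.
  by apply: nZm; apply/onE; rewrite ez dotvDl h1 h2 !mulr0 addr0.
move: h0; rewrite e3 e4 pencil_form_span => /eqP.
by rewrite mulf_eq0 oppr_eq0 expf_eq0 (negPf dZ) andbF orbF => /eqP.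
Qed.

Lemma pencil_form_harmonic_pencil (Z P1 P2 P3 P4 : point) :
  [/\ det3 (val Z) (val P1) (val P2) != 0, det3 (val Z) (val P1) (val P3) != 0,
      det3 (val Z) (val P1) (val P4) != 0 & det3 (val Z) (val P2) (val P3) != 0] ->
  det3 (val Z) (val P2) (val P4) != 0 -> det3 (val Z) (val P3) (val P4) != 0 ->
  pencil_form (val Z) (val P1) (val P2) (val P3) (val P4) = 0 ->
  harmonic_pencil Z (join Z P1) (join Z P2) (join Z P3) (join Z P4).
Proof.
move=> [d12 d13 d14 d23] d24 d34 h0.
have [nZ1 nZ2 _] := det3_neq0_neq d12; have [_ nZ3 _] := det3_neq0_neq d23.
have [_ nZ4 _] := det3_neq0_neq d34.
have [ZZ1 ZZ2 ZZ3 ZZ4] : [/\ on Z (join Z P1), on Z (join Z P2), on Z (join Z P3)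
    & on Z (join Z P4)] by split; [case: (is_join_join nZ1) | case: (is_join_join nZ2)
    | case: (is_join_join nZ3) | case: (is_join_join nZ4)] => _ [].
have [n12 n13 n14 n23] := And4 (det3_neq0_join_neq d12) (det3_neq0_join_neq d13)
  (det3_neq0_join_neq d14) (det3_neq0_join_neq d23).
have [n24 n34] := conj (det3_neq0_join_neq d24) (det3_neq0_join_neq d34).
do 2![split; first by []]; split; first by [].
case: (exists_dotv_neq0 (point_neq0 Z)) => e e0 ze.
have nZm : ~ on Z (point_of e) by rewrite on_point_of // => /eqP; apply/negP.
exists (point_of e); split=> //.
have [X1 M1 [a1 [b1 [b10 e1]]]] := meet_join_comb nZ1 nZm.
have [X2 M2 [a2 [b2 [b20 e2]]]] := meet_join_comb nZ2 nZm.
have [X3 M3 [a3 [b3 [b30 e3]]]] := meet_join_comb nZ3 nZm.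
have [X4 M4 [a4 [b4 [b40 e4]]]] := meet_join_comb nZ4 nZm.
exists X1, X2, X3, X4; split=> //.
case: M1 M2 M3 M4 => _ [X1l X1m] [_ [X2l X2m]] [_ [X3l X3m]] [_ [X4l X4m]].
apply: (pencil_form_harmonic nZm X1m X2m X3m X4m).
- by split; [apply: (meet_pencil_neq n12 ZZ1 ZZ2 nZm) | apply: (meet_pencil_neq n13 ZZ1 ZZ3 nZm)
    | apply: (meet_pencil_neq n14 ZZ1 ZZ4 nZm) | apply: (meet_pencil_neq n23 ZZ2 ZZ3 nZm)].
- exact: (meet_pencil_neq n24 ZZ2 ZZ4 nZm).
- exact: (meet_pencil_neq n34 ZZ3 ZZ4 nZm).
by rewrite e1 e2 e3 e4 pencil_form_comb h0 mulr0.
Qed.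

Lemma exists_harmonic_reflection (P X : point) (m : line F) :
  ~ on P m -> exists Y, harmonic_reflection P m X Y.
Proof.
move=> nPm; have [XP|nXP] := eqVneq X P; first by exists X; left; split; [left|].
have [Xm|nXm] := eqVneq (dotv (val X) (val m)) 0.
  by exists X; left; split=> //; right; apply/onE.
have {}nXm : ~ on X m by move/onE/eqP; apply/negP.
have {}nXP : X <> P by apply/eqP.
have [_ [Xn Pn]] := is_join_join nXP.
have nnm : join X P <> m by move=> e; apply: nPm; rewrite -e.
have [_ [Mn Mm]] := is_meet_meet nnm; set M := meet _ _ in Mn Mm.
have nPM : P <> M by move=> e; apply: nPm; rewrite e.
case: (on_join_comb nPM Pn Mn Xn) => a [b eX].
have b0 : b != 0.
  apply/eqP => b0; apply: nXP; apply: (@scale_point_eq _ _ _ a).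
  by rewrite eX b0 scale0r addr0.
have a0 : a != 0.
  apply/eqP => a0; apply: nXm; suff -> : X = M by [].
  by apply: (@scale_point_eq _ _ _ b); rewrite eX a0 scale0r add0r.
have hc := point_neq_crossv nPM.
have eP : val P = 1 *: val P + 0 *: val M by rewrite scale1r scale0r addr0.
have eM : val M = 0 *: val P + 1 *: val M by rewrite scale1r scale0r add0r.
have y0 : (- a) *: val P + b *: val M != 0.
  apply/eqP => e; move: (crossv_comb (val P) (val M) 1 0 (- a) b).
  rewrite -eP e crossv0 => /esym/eqP; rewrite scaler_eq0 (negPf hc) orbF.
  by rewrite mul1r mul0r subr0 (negPf b0).
(* [- a P + b M] is the harmonic conjugate of [X = a P + b M] w.r.t. [P, M]. *)
case: (val_point_of y0) => k k0 eY.
have {}eY : val (point_of ((- a) *: val P + b *: val M)) =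
    (k * - a) *: val P + (k * b) *: val M by rewrite eY scalerDr !scalerA.
exists (point_of ((- a) *: val P + b *: val M)); right; split=> //; split=> //.
exists (join X P), M; split; [exact: is_join_join | by split=> //; split |].
split; [split | split; [split|]]; last first.
  by exists a, b, (k * - a), (k * b); split=> //; ring.
- apply: (comb_neq eX eY hc).
  by rewrite (_ : _ - _ = 2%:R * k * a * b); [rewrite !mulf_neq0 | ring].
- by apply: (comb_neq eM eY hc); rewrite mul1r mul0r sub0r mulrN opprK mulf_neq0.
- by apply: (comb_neq eM eX hc); rewrite mul1r mul0r sub0r oppr_eq0.
- by apply: (comb_neq eP eY hc); rewrite mul1r mul0r subr0 mulf_neq0.
- by apply: (comb_neq eP eX hc); rewrite mul1r mul0r subr0.
- apply: (comb_neq eP eM hc); rewrite mul1r mul0r subr0; exact: oner_neq0.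
Qed.

Lemma hcurve_form_sides (A C B D Z : point) : general_position A C B D ->
  [/\ Z <> A, Z <> C, Z <> B & Z <> D] ->
  hcurve_form (val A) (val C) (val B) (val D) (val Z) = 0 ->
  [/\ det3 (val Z) (val A) (val C) != 0, det3 (val Z) (val A) (val D) != 0,
      det3 (val Z) (val B) (val C) != 0 & det3 (val Z) (val B) (val D) != 0].
Proof.
case=> _ [_ [nACB nACD nABD nCBD]] [nZA nZC nZB nZD] hq.
have col X Y W : det3 (val X) (val Y) (val W) = 0 -> collinear X Y W.
  by move/collinear_det3.
have sAC_AD : det3 (val Z) (val A) (val C) = 0 -> det3 (val Z) (val A) (val D) != 0.
  by move=> /col h1; apply/eqP => /col h2; apply: nACD; apply: (collinear_pivot nZA).
have sAC_BC : det3 (val Z) (val A) (val C) = 0 -> det3 (val Z) (val B) (val C) != 0.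
  move=> /col/collinear_rot/collinear_rot/collinear_swap h1; apply/eqP.
  move=> /col/collinear_rot/collinear_rot/collinear_swap h2; apply: nACB.
  exact/collinear_swap/(collinear_pivot nZC h1 h2).
have sAD_BD : det3 (val Z) (val A) (val D) = 0 -> det3 (val Z) (val B) (val D) != 0.
  move=> /col/collinear_rot/collinear_rot/collinear_swap h1; apply/eqP.
  move=> /col/collinear_rot/collinear_rot/collinear_swap h2; apply: nABD.
  exact/collinear_rot/(collinear_pivot nZD h1 h2).
have sBC_BD : det3 (val Z) (val B) (val C) = 0 -> det3 (val Z) (val B) (val D) != 0.
  move=> /col h1; apply/eqP => /col h2; apply: nCBD; apply/collinear_swap.
  exact: (collinear_pivot nZB).
have {}hq : det3 (val Z) (val A) (val C) * det3 (val Z) (val B) (val D) =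
    - (det3 (val Z) (val A) (val D) * det3 (val Z) (val B) (val C)).
  by apply/eqP; rewrite -addr_eq0; apply/eqP.
have zero2 (x y : F) : x * y = 0 -> x = 0 \/ y = 0.
  by move/eqP; rewrite mulf_eq0 => /orP[]/eqP; [left | right].
split; apply/eqP => h.
- have /zero2[h'|h'] : det3 (val Z) (val A) (val D) * det3 (val Z) (val B) (val C) = 0.
    by apply/eqP; rewrite -oppr_eq0 -hq h mul0r.
  + by move: (sAC_AD h); rewrite h' eqxx.
  + by move: (sAC_BC h); rewrite h' eqxx.
- move: hq; rewrite h mul0r oppr0 => /zero2[h'|h'].
  + by move: (sAC_AD h'); rewrite h eqxx.
  + by move: (sAD_BD h); rewrite h' eqxx.
- move: hq; rewrite h mulr0 oppr0 => /zero2[h'|h'].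
  + by move: (sAC_BC h'); rewrite h eqxx.
  + by move: (sBC_BD h); rewrite h' eqxx.
- have /zero2[h'|h'] : det3 (val Z) (val A) (val D) * det3 (val Z) (val B) (val C) = 0.
    by apply/eqP; rewrite -oppr_eq0 -hq h mulr0.
  + by move: (sAD_BD h'); rewrite h eqxx.
  + by move: (sBC_BD h'); rewrite h eqxx.
Qed.

Lemma hcurve_form_diagonals (A C B D Z : point) : general_position A C B D ->
  [/\ Z <> A, Z <> C, Z <> B & Z <> D] ->
  hcurve_form (val A) (val C) (val B) (val D) (val Z) = 0 ->
  det3 (val Z) (val A) (val B) != 0 /\ det3 (val Z) (val C) (val D) != 0.
Proof.
case=> [[_ nAB _ _] [[nCD _] [nACB nACD nABD nCBD]]] [nZA nZC nZB nZD] hq.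
have dABC : det3 (val A) (val B) (val C) != 0.
  by rewrite det3_swap23 oppr_eq0 noncollinear_det3.
have dBCD : det3 (val B) (val C) (val D) != 0.
  by rewrite det3_swap12 oppr_eq0 noncollinear_det3.
split; apply/eqP; rewrite det3_cycle.
  move=> /(det3_eq0_span (point_neq_crossv nAB)) [u [v e]].
  move: hq; rewrite e hcurve_form_diagAB => /eqP.
  rewrite !mulf_eq0 oppr_eq0 (negPf hchar) (negPf dABC).
  rewrite (negPf (noncollinear_det3 nABD)) /= !orbF.
  case/orP=> /eqP u0; [apply: nZB; apply: (@scale_point_eq _ _ _ v)
                     | apply: nZA; apply: (@scale_point_eq _ _ _ u)].
    by rewrite e u0 scale0r add0r.
  by rewrite e u0 scale0r addr0.
move=> /(det3_eq0_span (point_neq_crossv nCD)) [u [v e]].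
move: hq; rewrite e hcurve_form_diagCD => /eqP.
rewrite !mulf_eq0 oppr_eq0 (negPf hchar) (negPf dBCD).
rewrite (negPf (noncollinear_det3 nACD)) /= !orbF.
case/orP=> /eqP u0; [apply: nZD; apply: (@scale_point_eq _ _ _ v)
                   | apply: nZC; apply: (@scale_point_eq _ _ _ u)].
  by rewrite e u0 scale0r add0r.
by rewrite e u0 scale0r addr0.
Qed.

Lemma harmonic_curve_ofE (A C B D Z : point) : general_position A C B D ->
  harmonic_curve_of A C B D Z <-> hcurve_form (val A) (val C) (val B) (val D) (val Z) = 0.
Proof.
move=> gp; split.
  case=> [->|[->|[->|[->|[_ [la [lc [lb [ld [jA jC jB jD hp]]]]]]]]]];
    try by case: (hcurve_form_vertex (val A) (val C) (val B) (val D)).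
  exact: harmonic_pencil_join_form jA jB jC jD hp.
move=> hq.
have [->|nZA] := eqVneq Z A; first by left.
have [->|nZC] := eqVneq Z C; first by right; left.
have [->|nZB] := eqVneq Z B; first by right; right; left.
have [->|nZD] := eqVneq Z D; first by right; right; right; left.
have nZ4 : [/\ Z <> A, Z <> C, Z <> B & Z <> D] by split; apply/eqP.
have [dAC dAD dBC dBD] := hcurve_form_sides gp nZ4 hq.
have [dAB dCD] := hcurve_form_diagonals gp nZ4 hq.
case: nZ4 => {}nZA {}nZC {}nZB {}nZD.
do 4!right; split=> //.
exists (join Z A), (join Z C), (join Z B), (join Z D); split;
  try exact: is_join_join.
exact: pencil_form_harmonic_pencil.
Qed.
End HarmonicCurve.

Section Polarity.
Variable F : fieldType.
Hypothesis hchar : (2%:R : F) != 0.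
Local Notation vec := 'rV[F]_3.
Local Notation point := (point F).

Variable K : vec -> vec.
Hypothesis K_lin : forall a b x y, K (a *: x + b *: y) = a *: K x + b *: K y.
Hypothesis K_sym : forall x y, dotv (K x) y = dotv x (K y).
Hypothesis K_inj0 : forall x, K x = 0 -> x = 0.

Definition bform (x y : vec) := dotv (K x) y.
Definition qform (x : vec) := bform x x.

Lemma KZ a x : K (a *: x) = a *: K x.
Proof. by have := K_lin a 0 x 0; rewrite !scale0r !addr0. Qed.

Lemma bformC x y : bform x y = bform y x.
Proof. by rewrite /bform K_sym dotvC. Qed.

Lemma bformDl a b x y w : bform (a *: x + b *: y) w = a * bform x w + b * bform y w.
Proof. by rewrite /bform K_lin dotvDl. Qed.

Lemma bformDr a b x y w : bform w (a *: x + b *: y) = a * bform w x + b * bform w y.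
Proof. by rewrite /bform dotvDr. Qed.

Lemma bformZl a x w : bform (a *: x) w = a * bform x w.
Proof. by rewrite /bform KZ dotvZl. Qed.

Lemma bformZr a x w : bform w (a *: x) = a * bform w x.
Proof. by rewrite /bform dotvZr. Qed.

Lemma bformD1l x y w : bform (x + y) w = bform x w + bform y w.
Proof. by have := bformDl 1 1 x y w; rewrite !scale1r !mul1r. Qed.

Lemma bformD1r x y w : bform w (x + y) = bform w x + bform w y.
Proof. by rewrite bformC bformD1l !(bformC w). Qed.

Lemma qformZ a x : qform (a *: x) = a ^+ 2 * qform x.
Proof. by rewrite /qform bformZl bformZr mulrA expr2. Qed.

Lemma qformD a b x y :
  qform (a *: x + b *: y) = a ^+ 2 * qform x + 2%:R * a * b * bform x y + b ^+ 2 * qform y.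
Proof. by rewrite /qform bformDl !bformDr (bformC y x); ring. Qed.

Lemma K_neq0 (x : vec) : x != 0 -> K x != 0.
Proof. by apply: contraNneq => /K_inj0 ->. Qed.

Lemma K_crossv_neq0 (x y : vec) : crossv x y != 0 -> crossv (K x) (K y) != 0.
Proof.
move=> hc; apply/eqP => h.
have hy : y != 0 by apply: contraNneq hc => ->; rewrite crossv0.
case: (crossv_eq0_scale h (K_neq0 hy)) => k e.
have : K (1 *: x + (- k) *: y) = 0 by rewrite K_lin e scale1r scaleNr subrr.
move/K_inj0; rewrite scale1r scaleNr => /eqP; rewrite subr_eq0 => /eqP ex.
by move: hc; rewrite ex crossvZl crossvv scaler0 eqxx.
Qed.

Variable S : point -> Prop.
Variable pol : point -> line F.
Hypothesis S_qform : forall Z, S Z <-> qform (val Z) = 0.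
Hypothesis pol_polarity : is_polarity pol.
Hypothesis pol_absolute : forall P, on P (pol P) <-> S P.

(* The polar of [P] is the line with coordinates [K P]. *)
Definition polar_by_form (P : point) := crossv (val (pol P)) (K (val P)) = 0.

Lemma pol_inj : injective pol.
Proof. by case: pol_polarity => /bij_inj. Qed.

Lemma pol_sym P Q : on P (pol Q) <-> on Q (pol P).
Proof. by case: pol_polarity. Qed.

Lemma absolute_point_of (w : vec) : w != 0 -> qform w = 0 -> S (point_of w).
Proof.
by move=> hw h; apply/S_qform; case: (val_point_of hw) => k _ ->; rewrite qformZ h mulr0.
Qed.

Lemma absolute_on_polar (P W : point) : S P -> S W -> on W (pol P) -> W = P.
Proof.
move=> SP SW WP; apply: pol_inj.
have [->//|nWP] := eqVneq W P.
have PW : on P (pol W) by apply/pol_sym.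
by apply: (join_uniq (elimN eqP nWP)) => //; apply/pol_absolute.
Qed.

(* Otherwise the polar of [P] would contain a second point of the conic, on a
   line through [P] that is not tangent to it. *)
Lemma absolute_polar_by_form P : S P -> polar_by_form P.
Proof.
move=> SP; have hP : qform (val P) = 0 by apply/S_qform.
set l := val (pol P); set t := K (val P); have tP : dotv t (val P) = 0 := hP.
have lP : dotv l (val P) = 0 by rewrite dotvC; apply/onE/pol_absolute.
have tangent w : qform w = 0 -> dotv l w = 0 -> dotv t w != 0 -> False.
  move=> qw lw tw; have w0 : w != 0 by apply: contraNneq tw => ->; rewrite dotvC dot0v.
  case: (val_point_of w0) => k k0 eW.
  have WP : on (point_of w) (pol P) by rewrite onE eW dotvZl dotvC lw mulr0.
  have := absolute_on_polar SP (absolute_point_of w0 qw) WP.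
  move/(congr1 (fun X : point => dotv t (val X))); rewrite eW dotvZr tP.
  by move=> /eqP; rewrite mulf_eq0 (negPf k0) (negPf tw).
apply/eqP; apply: contraT => /exists_dotv_eq0_neq0 [y [ly ty]]; exfalso.
have [qy|qy] := eqVneq (qform y) 0; first exact: (tangent y).
pose s := - (2%:R * dotv t y) / qform y.
have s0 : s != 0 by rewrite mulf_neq0 ?invr_eq0 // oppr_eq0 mulf_neq0.
apply: (tangent (1 *: val P + s *: y)).
- by rewrite qformD hP /bform -/t /s; field.
- by rewrite dotvDr lP ly !mulr0 addr0.
- by rewrite dotvDr tP mulr0 add0r mulf_neq0.
Qed.

Lemma polar_by_formE (Y X : point) :
  polar_by_form Y -> on X (pol Y) <-> bform (val Y) (val X) = 0.
Proof.
move=> /crossv_eq0_scale /(_ (K_neq0 (point_neq0 Y))) [k e].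
have k0 : k != 0.
  by apply: contraTneq (point_neq0 (pol Y)) => k0; rewrite e k0 scale0r eqxx.
rewrite onE e dotvZr /bform dotvC; split => [/eqP|->]; last by rewrite mulr0.
by rewrite mulf_eq0 (negPf k0) => /eqP.
Qed.

Lemma polar_by_form_of2 (P X Y : point) : X <> Y -> on X (pol P) -> on Y (pol P) ->
  bform (val P) (val X) = 0 -> bform (val P) (val Y) = 0 -> polar_by_form P.
Proof.
move=> /point_neq_crossv hc; rewrite !onE => h1 h2 h3 h4.
case: (dotv_eq0_crossv_scale (point_neq0 (pol P)) _ _ hc);
  rewrite ?(dotvC (val (pol P))) //.
case: (dotv_eq0_crossv_scale (K_neq0 (point_neq0 P)) h3 h4 hc) => k' e' k e.
by rewrite /polar_by_form e e' crossvZl crossvZr crossvv !scaler0.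
Qed.

Lemma polar_by_form_conj2 (P U1 U2 : point) : S U1 -> S U2 -> U1 <> U2 ->
  bform (val U1) (val P) = 0 -> bform (val U2) (val P) = 0 -> polar_by_form P.
Proof.
move=> S1 S2 ne b1 b2.
have o1 : on U1 (pol P) by apply/pol_sym/(polar_by_formE _ (absolute_polar_by_form S1)).
have o2 : on U2 (pol P) by apply/pol_sym/(polar_by_formE _ (absolute_polar_by_form S2)).
by apply: (polar_by_form_of2 ne o1 o2); rewrite bformC.
Qed.

(* The line [P U] meets the conic again at [U' = U + s P]; the point [Y] with
   [K Y] proportional to [U x U'] is conjugate to [U], [U'] and hence [P]. *)
Lemma exists_conj_polar_by_form (P U : point) : S U -> qform (val P) != 0 ->
  bform (val U) (val P) != 0 -> crossv (val P) (val U) != 0 ->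
  exists Y : point,
    [/\ polar_by_form Y, bform (val Y) (val P) = 0 & bform (val Y) (val U) = 0].
Proof.
move=> SU hp bup cpu; have hu : qform (val U) = 0 by apply/S_qform.
pose s := - (2%:R * bform (val U) (val P)) / qform (val P).
have s0 : s != 0 by rewrite mulf_neq0 ?invr_eq0 // oppr_eq0 mulf_neq0.
pose u' := 1 *: val U + s *: val P.
have cuu : crossv (val U) u' != 0.
  rewrite /u' scale1r (_ : crossv _ _ = s *: crossv (val U) (val P)); last by vring.
  by rewrite scaler_eq0 negb_or s0 crossvC oppr_eq0.
have u'0 : u' != 0 by apply: contraNneq cuu => ->; rewrite crossv0.
case: (val_point_of u'0) => k k0 eU'.
have SU' := absolute_point_of u'0 (_ : qform u' = 0).
have {SU'}SU' : S (point_of u') by apply: SU'; rewrite /u' qformD hu /s; field.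
have cUU' : crossv (val U) (val (point_of u')) != 0.
  by rewrite eU' crossvZr scaler_eq0 negb_or k0.
have nUU' : U <> point_of u' by move=> e; move: cUU'; rewrite -e crossvv eqxx.
case: (val_point_of (K_crossv_neq0 cUU')) => m m0 eY.
set Y := point_of _ in eY.
have yu : bform (val Y) (val U) = 0.
  by rewrite /bform K_sym eY dotvZl dotvC dotv_crossl mulr0.
have yu' : bform (val Y) (val (point_of u')) = 0.
  by rewrite /bform K_sym eY dotvZl dotvC dotv_crossr mulr0.
exists Y; split => //.
  apply: (polar_by_form_of2 nUU') => //.
    by apply/pol_sym/(polar_by_formE _ (absolute_polar_by_form SU)); rewrite bformC.
  by apply/pol_sym/(polar_by_formE _ (absolute_polar_by_form SU')); rewrite bformC.
have -> : val P = (k * s)^-1 *: val (point_of u') + (- s^-1) *: val U.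
  rewrite eU' /u' scale1r scalerA invfM mulrAC mulVf // mul1r scalerDr scalerA.
  by rewrite mulVf // scale1r addrAC scaleNr subrr add0r.
by rewrite bformDr yu yu' !mulr0 addr0.
Qed.

Lemma polar_by_form_secants (P U1 U2 : point) : S U1 -> S U2 -> qform (val P) != 0 ->
  bform (val U1) (val P) != 0 -> bform (val U2) (val P) != 0 ->
  det3 (val P) (val U1) (val U2) != 0 -> polar_by_form P.
Proof.
move=> S1 S2 hp b1 b2 hd.
have c1 : crossv (val P) (val U1) != 0.
  by move: hd; rewrite det3_cycle det3_cycle => /det3_neq0_crossv.
have c2 : crossv (val P) (val U2) != 0.
  by move: hd; rewrite det3_cycle => /det3_neq0_crossv; rewrite crossvC oppr_eq0.
case: (exists_conj_polar_by_form S1 hp b1 c1) => Y1 [g1 p1 u1].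
case: (exists_conj_polar_by_form S2 hp b2 c2) => Y2 [g2 p2 u2].
have nY : Y1 <> Y2.
  by move=> e; subst Y2; move: hd; rewrite (dotv_eq0_det3 (K_neq0 (point_neq0 Y1)) p1 u1 u2) eqxx.
apply: (polar_by_form_of2 nY); rewrite 1?bformC //.
  exact/pol_sym/(polar_by_formE _ g1).
exact/pol_sym/(polar_by_formE _ g2).
Qed.

Lemma polar_by_form_secants3 (P U1 U2 U3 : point) : S U1 -> S U2 -> S U3 ->
  qform (val P) != 0 -> bform (val U1) (val P) != 0 -> bform (val U2) (val P) != 0 ->
  bform (val U3) (val P) != 0 -> det3 (val U1) (val U2) (val U3) != 0 -> polar_by_form P.
Proof.
move=> S1 S2 S3 hp b1 b2 b3 hd.
have [d12|] := eqVneq (det3 (val P) (val U1) (val U2)) 0; last exact: polar_by_form_secants.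
have [d13|] := eqVneq (det3 (val P) (val U1) (val U3)) 0; last exact: polar_by_form_secants.
have nPU : P <> U1 by move=> e; move: hp; rewrite e (S_qform _).1 ?eqxx.
move/collinear_det3: d12 => d12; move/collinear_det3: d13 => d13.
by case/eqP: hd; apply/collinear_det3; apply: collinear_pivot d12 d13.
Qed.

(* Either two of the four absolute points are conjugate to [P], or three of
   them are not, and these three are not collinear. *)
Lemma polar_by_form_all (A C B D : point) : general_position A C B D ->
  S A -> S C -> S B -> S D -> forall P, polar_by_form P.
Proof.
case=> [[nAC nAB nAD nCB] [[nCD nBD] [n1 n2 n3 n4]]] SA SC SB SD P.
move/noncollinear_det3: n1 => n1; move/noncollinear_det3: n2 => n2.
move/noncollinear_det3: n3 => n3; move/noncollinear_det3: n4 => n4.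
have [hp|hp] := eqVneq (qform (val P)) 0; first by apply/absolute_polar_by_form/S_qform.
have [bA|bA] := eqVneq (bform (val A) (val P)) 0.
  have [bC|bC] := eqVneq (bform (val C) (val P)) 0; first exact: (polar_by_form_conj2 SA SC).
  have [bB|bB] := eqVneq (bform (val B) (val P)) 0; first exact: (polar_by_form_conj2 SA SB).
  have [bD|bD] := eqVneq (bform (val D) (val P)) 0; first exact: (polar_by_form_conj2 SA SD).
  exact: (polar_by_form_secants3 SC SB SD).
have [bC|bC] := eqVneq (bform (val C) (val P)) 0.
  have [bB|bB] := eqVneq (bform (val B) (val P)) 0; first exact: (polar_by_form_conj2 SC SB).
  have [bD|bD] := eqVneq (bform (val D) (val P)) 0; first exact: (polar_by_form_conj2 SC SD).
  exact: (polar_by_form_secants3 SA SB SD).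
have [bB|bB] := eqVneq (bform (val B) (val P)) 0.
  have [bD|bD] := eqVneq (bform (val D) (val P)) 0; first exact: (polar_by_form_conj2 SB SD).
  exact: (polar_by_form_secants3 SA SC SD).
exact: (polar_by_form_secants3 SA SC SB).
Qed.

Lemma absolute_bform_neq0 (U V : point) : S U -> S V -> U <> V -> bform (val U) (val V) != 0.
Proof.
move=> /S_qform qU /S_qform qV ne; apply/eqP => h; have hc := point_neq_crossv ne.
case: (dotv_eq0_crossv_scale (K_neq0 (point_neq0 U)) qU h hc) => k1 e1.
case: (dotv_eq0_crossv_scale (K_neq0 (point_neq0 V)) _ qV hc) => [|k2 e2].
  by rewrite -/(bform _ _) bformC.
by move: (K_crossv_neq0 hc); rewrite e1 e2 crossvZl crossvZr crossvv !scaler0 eqxx.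
Qed.

Lemma absolute_det3_neq0 (A B C : point) : S A -> S B -> S C ->
  A <> B -> A <> C -> B <> C -> det3 (val A) (val B) (val C) != 0.
Proof.
move=> SA SB SC nAB nAC nBC; apply/eqP => /(det3_eq0_span (point_neq_crossv nAB)) [x [y e]].
have := (S_qform C).1 SC; rewrite e qformD (S_qform A).1 // (S_qform B).1 //.
rewrite !mulr0 addr0 add0r => /eqP.
rewrite !mulf_eq0 (negPf hchar) (negPf (absolute_bform_neq0 SA SB nAB)) /= orbF.
case/orP => /eqP h0.
  by apply: nBC; symmetry; apply: (@scale_point_eq _ _ _ y); rewrite e h0 scale0r add0r.
by apply: nAC; symmetry; apply: (@scale_point_eq _ _ _ x); rewrite e h0 scale0r addr0.
Qed.

Lemma absolute_noncollinear (A B C : point) : S A -> S B -> S C ->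
  A <> B -> A <> C -> B <> C -> ~ collinear A B C.
Proof. by move=> SA SB SC nAB nAC nBC /collinear_det3/eqP; apply/negP/absolute_det3_neq0. Qed.

(* For [a], [b], [c] on the conic: [pole_vec a b c] is the pole of the line
   [a b], and [reflect_vec a b c] the image of [c] under the harmonic
   reflection with centre that pole and axis [a b]. *)
Definition pole_vec (a b c : vec) :=
  bform b c *: a + bform a c *: b + (- bform a b) *: c.
Definition reflect_vec (a b c : vec) :=
  (2%:R * bform b c) *: a + (2%:R * bform a c) *: b + (- bform a b) *: c.

Lemma det3_pole_vec (a b c : vec) : det3 a b (pole_vec a b c) = - bform a b * det3 a b c.
Proof. rewrite /pole_vec; vcomp; ring. Qed.

Lemma det3_pole_vec_cd (a b c d : vec) :
  det3 (pole_vec a b c) c d = bform a c * det3 d b c - bform b c * det3 a d c.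
Proof. rewrite /pole_vec; vcomp; ring. Qed.

Lemma det3_reflect_vec (a b c : vec) :
  det3 a b (reflect_vec a b c) = - bform a b * det3 a b c.
Proof. rewrite /reflect_vec; vcomp; ring. Qed.

Lemma det3_reflect_vec_bc (a b c : vec) :
  det3 b c (reflect_vec a b c) = 2%:R * bform b c * det3 a b c.
Proof. rewrite /reflect_vec; vcomp; ring. Qed.

Section AbsoluteTriangle.
Variables a b c : vec.
Hypotheses (qa : qform a = 0) (qb : qform b = 0) (qc : qform c = 0).

Lemma pole_vec_bform : [/\ bform (pole_vec a b c) a = 0, bform (pole_vec a b c) b = 0,
  bform (pole_vec a b c) c = 2%:R * bform a c * bform b c
  & qform (pole_vec a b c) = - 2%:R * bform a b * bform a c * bform b c].
Proof.
move: qa qb qc; rewrite /qform /pole_vec => qa' qb' qc'.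
split; rewrite ?bformD1l ?bformD1r ?bformZl ?bformZr ?qa' ?qb' ?qc'
  ?(bformC b a) ?(bformC c a) ?(bformC c b); ring.
Qed.

Lemma qform_reflect_vec : qform (reflect_vec a b c) = 0.
Proof.
move: qa qb qc; rewrite /qform /reflect_vec => qa' qb' qc'.
rewrite ?bformD1l ?bformD1r ?bformZl ?bformZr ?qa' ?qb' ?qc'
  ?(bformC b a) ?(bformC c a) ?(bformC c b).
ring.
Qed.

(* The conic in the coordinates of [z] with respect to [a, b, c] (Cramer's rule). *)
Lemma qform_triangle z : det3 a b c ^+ 2 * qform z = 2%:R *
  (bform a b * det3 z b c * det3 a z c + bform a c * det3 z b c * det3 a b z
   + bform b c * det3 a z c * det3 a b z).
Proof.
rewrite -qformZ cramer; move: qa qb qc; rewrite /qform => qa' qb' qc'.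
rewrite ?bformD1l ?bformD1r ?bformZl ?bformZr ?qa' ?qb' ?qc'
  ?(bformC b a) ?(bformC c a) ?(bformC c b).
ring.
Qed.
End AbsoluteTriangle.

Lemma hcurve_reflect_vec (A C B D : point) l : S A -> S C -> S B ->
  general_position A C B D -> l != 0 -> val D = l *: reflect_vec (val A) (val B) (val C) ->
  forall Z, harmonic_curve_of A C B D Z <-> S Z.
Proof.
move=> SA SC SB gp l0 eD Z; have [[nAC nAB _ nCB] _] := gp.
have hd := absolute_det3_neq0 SA SB SC nAB nAC (nesym nCB).
rewrite (harmonic_curve_ofE hchar _ gp) eD hcurve_formZd hcurve_form_span.
rewrite -(qform_triangle ((S_qform A).1 SA) ((S_qform B).1 SB) ((S_qform C).1 SC)).
rewrite S_qform; split=> [/eqP|->]; last by rewrite !mulr0.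
by rewrite mulf_eq0 (negPf l0) /= mulf_eq0 sqrf_eq0 (negPf hd) /= => /eqP.
Qed.

Lemma reflect_vec_general_position (A C B D : point) l : S A -> S C -> S B ->
  A <> C -> A <> B -> C <> B -> l != 0 ->
  val D = l *: reflect_vec (val A) (val B) (val C) -> general_position A C B D /\ S D.
Proof.
move=> SA SC SB nAC nAB nCB l0 eD.
have [qA qB qC] := And3 ((S_qform A).1 SA) ((S_qform B).1 SB) ((S_qform C).1 SC).
have hd := absolute_det3_neq0 SA SB SC nAB nAC (nesym nCB).
have SD : S D by apply/S_qform; rewrite eD qformZ (qform_reflect_vec qA qB qC) mulr0.
have dABD : det3 (val A) (val B) (val D) != 0.
  by rewrite eD det3Zr det3_reflect_vec !mulf_neq0 // oppr_eq0 (absolute_bform_neq0 SA SB).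
have dBCD : det3 (val B) (val C) (val D) != 0.
  by rewrite eD det3Zr det3_reflect_vec_bc !mulf_neq0 // (absolute_bform_neq0 SB SC (nesym nCB)).
have [_ nAD nBD] := det3_neq0_neq dABD; have [_ _ nCD] := det3_neq0_neq dBCD.
by split=> //; do !split=> //; apply: absolute_noncollinear.
Qed.

Section PolarByForm.
Hypothesis pol_form : forall P, polar_by_form P.

Lemma on_polE (P X : point) : on X (pol P) <-> bform (val P) (val X) = 0.
Proof. exact: polar_by_formE. Qed.

Lemma pole_vec_pole (A B C Q : point) (q : line F) : S A -> S B -> S C ->
  A <> B -> A <> C -> B <> C -> is_join A B q -> pol Q = q ->
  exists2 mu, mu != 0 & val Q = mu *: pole_vec (val A) (val B) (val C).
Proof.
move=> SA SB SC nAB nAC nBC [_ [Aq Bq]] pQ.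
have [b1 b2 _ _] := pole_vec_bform ((S_qform A).1 SA) ((S_qform B).1 SB) ((S_qform C).1 SC).
have p0 : pole_vec (val A) (val B) (val C) != 0.
  apply: (det3_neq0_r (x := val A) (y := val B)); rewrite det3_pole_vec mulf_neq0 //.
    by rewrite oppr_eq0 absolute_bform_neq0.
  exact: absolute_det3_neq0.
have hc := point_neq_crossv nAB.
have qa : bform (val Q) (val A) = 0 by apply/on_polE; rewrite pQ.
have qb : bform (val Q) (val B) = 0 by apply/on_polE; rewrite pQ.
case: (dotv_eq0_crossv_scale (K_neq0 (point_neq0 Q)) qa qb hc) => k1 e1.
case: (dotv_eq0_crossv_scale (K_neq0 p0) b1 b2 hc) => k2 e2.
have : crossv (val Q) (pole_vec (val A) (val B) (val C)) = 0.
  apply/eqP; apply: contraT => /K_crossv_neq0.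
  by rewrite e1 e2 crossvZl crossvZr crossvv !scaler0 eqxx.
case/crossv_eq0_scale => // mu e; exists mu => //.
by apply: contraTneq (point_neq0 Q) => m0; rewrite e m0 scale0r eqxx.
Qed.

Lemma harmonic_reflection_vec (A C B Q D : point) (q : line F) : S A -> S C -> S B ->
  A <> C -> A <> B -> C <> B -> is_join A B q -> pol Q = q ->
  harmonic_reflection Q q C D ->
  exists2 l, l != 0 & val D = l *: reflect_vec (val A) (val B) (val C).
Proof.
move=> SA SC SB nAC nAB nCB jq pQ.
have [qA qB qC] := And3 ((S_qform A).1 SA) ((S_qform B).1 SB) ((S_qform C).1 SC).
case: (pole_vec_pole SA SB SC nAB nAC (nesym nCB) jq pQ) => mu mu0 eQ.
have [_ _ b3 b4] := pole_vec_bform qA qB qC.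
have p0 := absolute_bform_neq0 SA SB nAB; have r0 := absolute_bform_neq0 SA SC nAC.
have s0 := absolute_bform_neq0 SB SC (nesym nCB).
have eqQ : qform (val Q) =
    mu ^+ 2 * (- 2%:R * bform (val A) (val B) * bform (val A) (val C) * bform (val B) (val C)).
  by rewrite eQ qformZ b4.
have eQC : bform (val Q) (val C) = mu * (2%:R * bform (val A) (val C) * bform (val B) (val C)).
  by rewrite eQ bformZl b3.
have qQ : qform (val Q) != 0 by rewrite eqQ !mulf_neq0 ?expf_neq0 // oppr_eq0.
have QC : bform (val Q) (val C) != 0 by rewrite eQC !mulf_neq0.
case=> [[[e|onC] _]|[_ [_ [n [M [jn [_ [Mn Mq]] hh]]]]]].
- by move: qQ; rewrite -e qC eqxx.
- by move: onC; rewrite -pQ => /on_polE /eqP; rewrite (negPf QC).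
have QM : bform (val Q) (val M) = 0 by apply/on_polE; rewrite pQ.
case: hh => _ [_ [a1 [b1 [c1 [d1 [eC eD h]]]]]].
have ha1 : bform (val Q) (val C) = a1 * qform (val Q).
  by rewrite eC bformDr QM mulr0 addr0.
(* [D = c1 / a1 * (2 a1 Q - C)]: the reflection of [C] with centre [Q] *)
have vD : a1 *: val D = c1 *: ((2%:R * a1) *: val Q - val C).
  apply/eqP; rewrite -subr_eq0; apply/eqP.
  transitivity ((b1 * c1 + a1 * d1) *: val M); last by rewrite h scale0r.
  by rewrite eD eC; apply: row3_eq; rewrite !mxE; ring.
have a10 : a1 != 0 by apply: contraNneq QC => a0; rewrite ha1 a0 mul0r.
have ea1 : a1 = - (mu * bform (val A) (val B))^-1.
  by apply: (mulIf qQ); rewrite -ha1 eQC eqQ; field; rewrite ?mu0 ?p0 ?r0 ?s0 ?hchar.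
exists (c1 * mu).
  rewrite mulf_neq0 //; apply: contraTneq (point_neq0 D) => c0.
  by rewrite negbK; apply/eqP; apply: (scalerI a10); rewrite vD c0 !scale0r scaler0.
apply: (scalerI a10); rewrite vD scalerA eQ.
by apply: row3_eq; rewrite /reflect_vec /pole_vec !mxE ea1; field; rewrite ?mu0 ?p0.
Qed.

Lemma on_pole_diag (A C B D Q : point) (q r : line F) : S A -> S C -> S B ->
  general_position A C B D -> is_join A B q -> is_join C D r -> pol Q = q ->
  on Q r <-> bform (val A) (val C) * det3 (val D) (val B) (val C) =
             bform (val B) (val C) * det3 (val A) (val D) (val C).
Proof.
move=> SA SC SB [[nAC nAB _ nCB] [[nCD _] _]] jq [_ [Cr Dr]] pQ.
case: (pole_vec_pole SA SB SC nAB nAC (nesym nCB) jq pQ) => mu mu0 eQ.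
rewrite (on_det3 _ nCD Cr Dr) eQ det3Zl det3_pole_vec_cd.
split=> [/eqP|->]; last by rewrite subrr mulr0.
by rewrite mulf_eq0 (negPf mu0) subr_eq0 => /eqP.
Qed.

(* [C_Q = S] puts the point [reflect_vec a b c] of the conic on [C_Q]; this and
   [D] on the conic give two equations whose combination forces
   [b(A,B) (b(A,C) [DBC] - b(B,C) [ADC])^2 = 0]. *)
Lemma hcurve_eq_pole_on_diag (A C B D Q : point) (q r : line F) :
  S A -> S C -> S B -> S D -> general_position A C B D ->
  (forall Z, harmonic_curve_of A C B D Z <-> S Z) ->
  is_join A B q -> is_join C D r -> pol Q = q -> on Q r.
Proof.
move=> SA SC SB SD gp hcur jq jr pQ; rewrite (on_pole_diag SA SC SB gp jq jr pQ).
have [[nAC nAB _ nCB] _] := gp.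
have [qA qB qC] := And3 ((S_qform A).1 SA) ((S_qform B).1 SB) ((S_qform C).1 SC).
have p0 := absolute_bform_neq0 SA SB nAB.
have hd := absolute_det3_neq0 SA SB SC nAB nAC (nesym nCB).
have e0 : reflect_vec (val A) (val B) (val C) != 0.
  apply: (det3_neq0_r (x := val A) (y := val B)).
  by rewrite det3_reflect_vec mulf_neq0 // oppr_eq0.
have := (hcur _).2 (absolute_point_of e0 (qform_reflect_vec qA qB qC)).
rewrite (harmonic_curve_ofE hchar _ gp); case: (val_point_of e0) => k k0 ->.
rewrite hcurve_formZ hcurve_form_at_span => /eqP.
rewrite !mulf_eq0 (negPf k0) oppr_eq0 (negPf hchar) (negPf hd) /= => /eqP E1.
have := qform_triangle qA qB qC (val D); rewrite (S_qform D).1 // mulr0.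
move/esym/eqP; rewrite mulf_eq0 (negPf hchar) /= => /eqP E2.
set al := det3 (val D) (val B) (val C) in E1 E2 *.
set be := det3 (val A) (val D) (val C) in E1 E2 *.
set ga := det3 (val A) (val B) (val D) in E1 E2 *.
set p := bform (val A) (val B) in E1 E2 p0 *.
set r' := bform (val A) (val C) in E1 E2 *.
set s := bform (val B) (val C) in E1 E2 *.
have : p * (r' * al - s * be) ^+ 2 = 0.
  transitivity ((al * r' + be * s) * (4%:R * r' * s * ga + r' * p * al + s * p * be)
     - 4%:R * r' * s * (p * al * be + r' * al * ga + s * be * ga)); first by ring.
  by rewrite E1 E2 !mulr0 subrr.
move/eqP; rewrite mulf_eq0 (negPf p0) expf_eq0 /= subr_eq0 => /eqP.
by rewrite (mulrC s).
Qed.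

(* With the pole [Q] of [A B] on [C D], the second intersection [D] of the
   conic with [C Q] is [reflect_vec a b c]. *)
Lemma pole_on_diag_hcurve_eq (A C B D Q : point) (q r : line F) :
  S A -> S C -> S B -> S D -> general_position A C B D ->
  is_join A B q -> is_join C D r -> pol Q = q -> on Q r ->
  forall Z, harmonic_curve_of A C B D Z <-> S Z.
Proof.
move=> SA SC SB SD gp jq jr pQ; rewrite (on_pole_diag SA SC SB gp jq jr pQ) => hQ.
have [[nAC nAB _ nCB] [[nCD _] _]] := gp.
have [qA qB qC] := And3 ((S_qform A).1 SA) ((S_qform B).1 SB) ((S_qform C).1 SC).
have [_ _ b3 b4] := pole_vec_bform qA qB qC.
have r0 := absolute_bform_neq0 SA SC nAC; have s0 := absolute_bform_neq0 SB SC (nesym nCB).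
set x := pole_vec (val A) (val B) (val C) in b3 b4.
have qx : qform x != 0.
  by rewrite b4 !mulf_neq0 ?oppr_eq0 // (absolute_bform_neq0 SA SB nAB).
have cCx : crossv (val C) x != 0.
  apply/eqP => /eqP; rewrite crossvC oppr_eq0 => /eqP /crossv_eq0_scale.
  by case=> [|t et]; [exact: point_neq0 | move: qx; rewrite et qformZ qC mulr0 eqxx].
have : det3 (val C) x (val D) = 0.
  by rewrite det3_swap12 /x det3_pole_vec_cd hQ subrr oppr0.
case/(det3_eq0_span cCx) => u [v eD].
have v0 : v != 0.
  apply/eqP => v0; apply: nCD; symmetry; apply: (@scale_point_eq _ _ _ u).
  by rewrite eD v0 scale0r addr0.
have := (S_qform D).1 SD; rewrite eD qformD qC bformC b3 b4 mulr0 add0r => /eqP.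
rewrite (_ : _ + _ = (2%:R * bform (val A) (val C) * bform (val B) (val C) * v) *
                      (2%:R * u - bform (val A) (val B) * v)); last by ring.
rewrite !mulf_eq0 (negPf hchar) (negPf r0) (negPf s0) (negPf v0) /= subr_eq0 => /eqP eu.
apply: (hcurve_reflect_vec SA SC SB gp (l := v / 2%:R)).
  by rewrite mulf_neq0 // invr_eq0.
have {}eu : u = bform (val A) (val B) * v / 2%:R by apply: (mulfI hchar); rewrite eu; field.
by rewrite eD eu /x /pole_vec /reflect_vec; apply: row3_eq; rewrite !mxE; field.
Qed.

Lemma hcurve_eq_iff_pole_on_diag (A C B D : point) : S A -> S C -> S B -> S D ->
  general_position A C B D ->
  (forall Z, harmonic_curve_of A C B D Z <-> S Z) <->
  (forall (Q : point) (q r : line F),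
     is_join A B q -> is_join C D r -> pol Q = q -> on Q r).
Proof.
move=> SA SC SB SD gp; split=> [hcur Q q r|hpole].
  exact: hcurve_eq_pole_on_diag.
have [[_ nAB _ _] [[nCD _] _]] := gp.
have [[g _ polK] _] := pol_polarity.
have jq := is_join_join nAB; have jr := is_join_join nCD.
exact: pole_on_diag_hcurve_eq SA SC SB SD gp jq jr (polK _) (hpole _ _ _ jq jr (polK _)).
Qed.

Lemma pole_reflection_quadrangle (A C B Q : point) (q : line F) : S A -> S C -> S B ->
  A <> C -> A <> B -> C <> B -> is_join A B q -> pol Q = q ->
  is_meet (pol A) (pol B) Q /\ (exists D, harmonic_reflection Q q C D) /\
  (forall D, harmonic_reflection Q q C D ->
     [/\ general_position A C B D, S D & forall Z, harmonic_curve_of A C B D Z <-> S Z]).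
Proof.
move=> SA SC SB nAC nAB nCB jq pQ; have [_ [Aq Bq]] := jq.
have nQq : ~ on Q q.
  rewrite -pQ => /pol_absolute /S_qform /eqP; apply/negP.
  have [qA qB qC] := And3 ((S_qform A).1 SA) ((S_qform B).1 SB) ((S_qform C).1 SC).
  case: (pole_vec_pole SA SB SC nAB nAC (nesym nCB) jq pQ) => mu mu0 ->.
  rewrite qformZ; have [_ _ _ ->] := pole_vec_bform qA qB qC.
  by rewrite !mulf_neq0 ?expf_neq0 ?oppr_eq0 // absolute_bform_neq0 //; exact: nesym.
split; first by split; [move/pol_inj | split; apply/pol_sym; rewrite pQ].
split; first exact: exists_harmonic_reflection.
move=> D /(harmonic_reflection_vec SA SC SB nAC nAB nCB jq pQ) [l l0 eD].
have [gp SD] := reflect_vec_general_position SA SC SB nAC nAB nCB l0 eD.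
by split=> //; apply: hcurve_reflect_vec SA SC SB gp l0 eD.
Qed.
End PolarByForm.
End Polarity.

Section HarmonicCurveOperator.
Variable F : fieldType.
Hypothesis hchar : (2%:R : F) != 0.
Local Notation vec := 'rV[F]_3.
Variables a c b d : vec.

Definition hcurve_op (z : vec) : vec :=
  det3 z a c *: crossv b d + det3 z b d *: crossv a c + det3 z a d *: crossv b c
  + det3 z b c *: crossv a d.

Lemma hcurve_op_lin al be x y :
  hcurve_op (al *: x + be *: y) = al *: hcurve_op x + be *: hcurve_op y.
Proof.
by apply: row3_eq; rewrite /hcurve_op !det3Dl !mxE; ring.
Qed.

Lemma dotv_hcurve_op x y : dotv (hcurve_op x) y =
  det3 x a c * det3 y b d + det3 x b d * det3 y a c + det3 x a d * det3 y b c
  + det3 x b c * det3 y a d.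
Proof.
rewrite /hcurve_op !dotvD1l !dotvZl.
by rewrite !(dotvC (crossv _ _)) -!/(det3 y _ _).
Qed.

Lemma hcurve_op_sym x y : dotv (hcurve_op x) y = dotv x (hcurve_op y).
Proof. by rewrite [RHS]dotvC !dotv_hcurve_op; ring. Qed.

Lemma dotv_hcurve_op_diag z : dotv (hcurve_op z) z = 2%:R * hcurve_form a c b d z.
Proof. by rewrite dotv_hcurve_op /hcurve_form /pencil_form; ring. Qed.

Lemma dotv_hcurve_op_a z :
  dotv (hcurve_op z) a = det3 a b z * det3 a d c - 2%:R * det3 a z c * det3 a b d.
Proof. rewrite /hcurve_op; vcomp; ring. Qed.

Lemma dotv_hcurve_op_b z :
  dotv (hcurve_op z) b = det3 a b z * det3 d b c - 2%:R * det3 a b d * det3 z b c.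
Proof. rewrite /hcurve_op; vcomp; ring. Qed.

Lemma dotv_hcurve_op_c z :
  dotv (hcurve_op z) c = det3 a z c * det3 d b c + det3 z b c * det3 a d c.
Proof. rewrite /hcurve_op; vcomp; ring. Qed.

(* In the coordinates [(x, y, w)] of [z] with respect to [a, b, c] the three
   equations [hcurve_op z . a = hcurve_op z . b = hcurve_op z . c = 0] force
   [x = 0], then [y = 0], then [w = 0]. *)
Lemma hcurve_op_inj0 : det3 a b c != 0 -> det3 d b c != 0 -> det3 a d c != 0 ->
  det3 a b d != 0 -> forall z, hcurve_op z = 0 -> z = 0.
Proof.
move=> hD hal hbe hga z hz.
have := dotv_hcurve_op_a z; have := dotv_hcurve_op_b z; have := dotv_hcurve_op_c z.
rewrite hz !dot0v.
move: hal hbe hga; set x := det3 z b c; set y := det3 a z c; set w := det3 a b z.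
set al := det3 d b c; set be := det3 a d c; set ga := det3 a b d.
move=> hal hbe hga e3 e2 e1.
have h4 : 4%:R * ga * be * x = 0.
  transitivity (al * (w * be - 2%:R * y * ga) - be * (w * al - 2%:R * ga * x)
     + 2%:R * ga * (y * al + x * be)); first by ring.
  by rewrite -e1 -e2 -e3 !mulr0 subrr addr0.
have h40 : (4%:R : F) != 0 by rewrite (_ : 4%:R = 2%:R * 2%:R) ?mulf_neq0 // -natrM.
have x0 : x = 0.
  by move/eqP: h4; rewrite !mulf_eq0 (negPf h40) (negPf hga) (negPf hbe) /= => /eqP.
have y0 : y = 0.
  by move/eqP: e3; rewrite eq_sym x0 mul0r addr0 mulf_eq0 (negPf hal) orbF => /eqP.
have w0 : w = 0.
  by move/eqP: e1; rewrite eq_sym y0 mulr0 mul0r subr0 mulf_eq0 (negPf hbe) orbF => /eqP.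
by apply: (scalerI hD); rewrite cramer -/x -/y -/w x0 y0 w0 !scale0r !addr0 scaler0.
Qed.
End HarmonicCurveOperator.

Section HarmonicCurveConic.
Variable F : fieldType.
Hypothesis hchar : (2%:R : F) != 0.
Local Notation point := (point F).

Lemma harmonic_curve_qform (A C B D Z : point) : general_position A C B D ->
  harmonic_curve_of A C B D Z <->
  qform (hcurve_op (val A) (val C) (val B) (val D)) (val Z) = 0.
Proof.
move=> gp; rewrite (harmonic_curve_ofE hchar _ gp) /qform /bform dotv_hcurve_op_diag.
by split=> [->|/eqP]; rewrite ?mulr0 // mulf_eq0 (negPf hchar) => /eqP.
Qed.

Lemma general_position_hcurve_op_inj0 (A C B D : point) : general_position A C B D ->
  forall z, hcurve_op (val A) (val C) (val B) (val D) z = 0 -> z = 0.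
Proof.
case=> _ [_ [nACB nACD nABD nCBD]]; apply: (hcurve_op_inj0 hchar).
- by rewrite det3_swap23 oppr_eq0 noncollinear_det3.
- by rewrite det3_cycle det3_swap12 oppr_eq0 noncollinear_det3.
- by rewrite det3_swap23 oppr_eq0 noncollinear_det3.
- exact: noncollinear_det3.
Qed.
End HarmonicCurveConic.

Theorem mainTheorem8 (F : fieldType) (hchar : (2%:R : F) != 0)
    (S : point F -> Prop) (pol : point F -> line F) :
  is_harmonic_curve S ->
  is_polarity pol ->
  (forall P, on P (pol P) <-> S P) ->
  (forall A C B D : point F,
     S A -> S C -> S B -> S D -> general_position A C B D ->
     ((forall Z, harmonic_curve_of A C B D Z <-> S Z) <->
      (forall (Q : point F) (q r : line F),
         is_join A B q -> is_join C D r -> pol Q = q -> on Q r))) /\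
  (forall (A C B : point F) (Q : point F) (q : line F),
     S A -> S C -> S B -> A <> C -> A <> B -> C <> B ->
     is_join A B q -> pol Q = q ->
     is_meet (pol A) (pol B) Q /\
     (exists D, harmonic_reflection Q q C D) /\
     (forall D, harmonic_reflection Q q C D ->
        [/\ general_position A C B D, S D &
            forall Z, harmonic_curve_of A C B D Z <-> S Z])).
Proof.
move=> [A0 [C0 [B0 [D0 [gp0 hS0]]]]] hpol habs.
pose K := hcurve_op (val A0) (val C0) (val B0) (val D0).
have K_lin := hcurve_op_lin (val A0) (val C0) (val B0) (val D0).
have K_sym := hcurve_op_sym (val A0) (val C0) (val B0) (val D0).
have K_inj0 := general_position_hcurve_op_inj0 hchar gp0.
have S_qform Z : S Z <-> qform K (val Z) = 0 by rewrite hS0 (harmonic_curve_qform hchar _ gp0).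
have [SA SC SB SD] : [/\ S A0, S C0, S B0 & S D0] by split; apply/hS0; do ?[by left | right].
have pol_form := polar_by_form_all hchar K_lin K_sym K_inj0 S_qform hpol habs gp0 SA SC SB SD.
split=> [A C B D|A C B Q q].
  exact: (hcurve_eq_iff_pole_on_diag hchar K_lin K_sym K_inj0 S_qform hpol pol_form).
exact: (pole_reflection_quadrangle hchar K_lin K_sym K_inj0 S_qform hpol habs pol_form).
Qed.
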